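(* Let $D\mathcal{M}$ be an $\ell c$DCB system. Then every positive equilibrium $x^*\in\mathbb{R}^n_{>0}$ of $D\mathcal{M}$ (viewed as a constant function on $[-\tau,0]$) is Lyapunov stable for the delay differential equation of $D\mathcal{M}$ on $C([-\tau,0];\mathbb{R}^n_{>0})$ with the supremum norm.
   Context: For $x,y\in\mathbb{R}^n$ with $x\ge 0$, write $x^{y}=\prod_{j=1}^n x_j^{y_j}$. A delayed mass-action system on species $X_1,\dots,X_n$ consists of reactions $R_i: y_{\cdot i}\to y'_{\cdot i}$, $i=1,\dots,r$, with complexes $y_{\cdot i},y'_{\cdot i}\in\mathbb{R}^n_{\ge0}$, rate constants $\kappa_i>0$ and delays $\tau_i\ge0$; with $\tau\ge\max_i\tau_i$, its dynamics is the delay differential equation $\dot x(t)=F(x_t):=\sum_{i=1}^r\kappa_i\big[x(t-\tau_i)^{y_{\cdot i}}y'_{\cdot i}-x(t)^{y_{\cdot i}}y_{\cdot i}\big]$, $t\ge 0$, where $x_t(s)=x(t+s)$, $s\in[-\tau,0]$, with initial function $\theta\in C([-\tau,0];\mathbb{R}^n_{\ge0})$. A positive equilibrium is $x^*\in\mathbb{R}^n_{>0}$ with $\sum_i\kappa_i (x^* )^{y_{\cdot i}}(y'_{\cdot i}-y_{\cdot i})=0$. A vector $\bar x\in\mathbb{R}^n_{>0}$ is a complex balanced equilibrium if for every complex $\eta$ of the network $\sum_{i: y_{\cdot i}=\eta}\kappa_i\bar x^{y_{\cdot i}}=\sum_{i: y'_{\cdot i}=\eta}\kappa_i\bar x^{y_{\cdot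 i}}$. A delayed complex balanced (DCB) system is a delayed mass-action system admitting a positive complex balanced equilibrium. Two delayed mass-action systems $D\mathcal{M}$ (right-hand side $F$) and $D\tilde{\mathcal{M}}$ (right-hand side $\tilde F$) on the same species are linearly conjugate via a positive diagonal matrix $Q$ if $F(Q\psi)=Q\tilde F(\psi)$ for all $\psi\in C([-\tau,0];\mathbb{R}^n_{>0})$, i.e. $x(t)=Q\tilde x(t)$ maps solutions of $D\tilde{\mathcal{M}}$ to solutions of $D\mathcal{M}$. An $\ell c$DCB system is a delayed mass-action system that is linearly conjugate via some positive diagonal matrix to a DCB system. *)

From HB Require Import structures.
From mathcomp Require Import all_boot all_order all_algebra.
From mathcomp Require Import all_classical all_reals all_analysis.
Set Implicit Arguments. Unset Strict Implicit. Unset Printing Implicit Defensive.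
Import Order.TTheory GRing.Theory Num.Theory.
Import numFieldNormedType.Exports.
Local Open Scope classical_set_scope.
Local Open Scope ring_scope.

(* A delayed mass-action system on n species: reactions R_i : y_{.i} -> y'_{.i},
   i < nr, complexes stored as the columns of n x nr matrices. *)
Record dmas (R : realType) (n : nat) := DMAS {
  nr : nat;
  ycomp : 'M[R]_(n, nr);
  ycomp' : 'M[R]_(n, nr);
  kappa : 'I_nr -> R;
  delay : 'I_nr -> R
}.

Arguments kappa [R n] d _.
Arguments delay [R n] d _.

Section DMAS.
Variables (R : realType) (n : nat).

Definition valid_dmas (S : dmas R n) : Prop :=
  (forall j i, 0 <= ycomp S j i) /\ (forall j i, 0 <= ycomp' S j i) /\
  (forall i, 0 < kappa S i) /\ (forall i, 0 <= delay S i).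

(* x^y = prod_j x_j^{y_j} (real powers, with 0^0 = 1) *)
Definition mono (x : 'I_n -> R) (y : 'cV[R]_n) : R :=
  \prod_(j < n) powR (x j) (y j ord0).

(* F(psi) = sum_i kappa_i [ psi(-tau_i)^{y_i} y'_i - psi(0)^{y_i} y_i ],
   psi a function on [-tau,0] (represented on R). *)
Definition Fdelay (S : dmas R n) (psi : R -> 'I_n -> R) : 'I_n -> R :=
  fun k => \sum_(i < nr S) kappa S i *
     (mono (psi (- delay S i)) (col i (ycomp S)) * ycomp' S k i
      - mono (psi 0) (col i (ycomp S)) * ycomp S k i).

Definition positive_equilibrium (S : dmas R n) (xs : 'I_n -> R) : Prop :=
  (forall k, 0 < xs k) /\
  (forall k, \sum_(i < nr S) kappa S i * mono xs (col i (ycomp S)) *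
               (ycomp' S k i - ycomp S k i) = 0).

(* complex balance at xb: for every complex eta (vectors that are not complexes
   of the network give two empty sums, so quantifying over all eta is the same) *)
Definition complex_balanced (S : dmas R n) (xb : 'I_n -> R) : Prop :=
  (forall k, 0 < xb k) /\
  forall eta : 'cV[R]_n,
    \sum_(i < nr S | col i (ycomp S) == eta) kappa S i * mono xb (col i (ycomp S))
    = \sum_(i < nr S | col i (ycomp' S) == eta) kappa S i * mono xb (col i (ycomp S)).

Definition DCB (S : dmas R n) : Prop :=
  valid_dmas S /\ exists xb, complex_balanced S xb.

Definition pos_cont_init (tau : R) (psi : R -> 'I_n -> R) : Prop :=
  (forall s, -tau <= s <= 0 -> forall k, 0 < psi s k) /\
  (forall k, {within `[-tau, 0], continuous (fun s => psi s k)}).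

Definition lin_conj (tau : R) (S S' : dmas R n) (q : 'I_n -> R) : Prop :=
  (forall k, 0 < q k) /\
  forall psi, pos_cont_init tau psi ->
    forall k, Fdelay S (fun s j => q j * psi s j) k = q k * Fdelay S' psi k.

Definition lcDCB (tau : R) (S : dmas R n) : Prop :=
  valid_dmas S /\
  exists (S' : dmas R n) (q : 'I_n -> R),
    (forall i, delay S' i <= tau) /\ DCB S' /\ lin_conj tau S S' q.

Definition is_solution (S : dmas R n) (tau : R) (theta : R -> 'I_n -> R)
    (T : R) (x : R -> 'I_n -> R) : Prop :=
  (forall s, -tau <= s <= 0 -> x s = theta s) /\
  (forall k, {within `[-tau, T[, continuous (fun t => x t k)}) /\
  (forall t, 0 < t < T -> forall k,
     is_derive t 1 (fun u => x u k) (Fdelay S (fun s => x (t + s)) k)).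

(* Lyapunov stability of the constant function xs in C([-tau,0]; R^n_{>0})
   with the supremum norm (max norm on R^n): for every eps > 0 there is
   delta > 0 such that every solution starting within delta of xs stays
   within eps of xs, for as long as it is defined. *)
Definition lyapunov_stable (S : dmas R n) (tau : R) (xs : 'I_n -> R) : Prop :=
  forall eps : R, 0 < eps -> exists2 delta : R, 0 < delta &
    forall theta, pos_cont_init tau theta ->
      (forall s, -tau <= s <= 0 -> forall k, `|theta s k - xs k| < delta) ->
      forall (T : R) (x : R -> 'I_n -> R), 0 < T -> is_solution S tau theta T x ->
        forall t, 0 <= t < T -> forall s, -tau <= s <= 0 ->
          forall k, `|x (t + s) k - xs k| < eps.

End DMAS.

From HB Require Import structures.
From mathcomp Require Import all_boot all_order all_algebra.
From mathcomp Require Import all_classical all_reals all_analysis.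
From mathcomp Require Import ring lra.
Import Order.TTheory GRing.Theory Num.Theory.
Import numFieldNormedType.Exports.
Local Open Scope classical_set_scope.
Local Open Scope ring_scope.
Set Implicit Arguments. Unset Strict Implicit.

(* A conjugacy [x = diag(q) x'] carries positive solutions and equilibria of the
   given system to those of a complex balanced system [P]; the equilibrium [xs]
   becomes [c = xs / q], which the Horn-Jackson argument shows to be complex
   balanced as well.  Along positive solutions of [P] the functional
     V(t) = sum_k h(c_k, x_k(t))
            + sum_i kappa_i int_{t - tau_i}^t h(c^{y_i}, x(s)^{y_i}) ds,
   where h(c, z) = z (ln z - ln c) - z + c, is nonincreasing: complex balance and
   the Fenchel-Young inequality w b <= h(m, w) + m (e^b - 1) make its derivative
   nonpositive.  An initial function close to [xs] makes V(0) small, and since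
   h(c_k, .) grows away from c_k, a small V(t) keeps x(t) close to [xs], in
   particular positive; a continuation argument then covers the whole interval of
   existence. *)

(** * Real analysis *)

Section RealAnalysis.
Variable R : realType.

Lemma within_continuous_dist (f : R -> R) (A : set R) x :
  {within A, continuous f} -> A x ->
  forall e, 0 < e -> exists2 d, 0 < d &
    forall y, A y -> `|y - x| < d -> `|f y - f x| < e.
Proof.
move=> /subspace_continuousP /(_ x) cf Ax e e0.
have /cvgrPdist_lt /(_ e e0) := cf Ax.
rewrite near_withinE => /nbhs_ballP[d d0 H].
exists d => // y Ay yx; rewrite distrC; apply: H => //.
by rewrite /ball /= distrC.
Qed.

Lemma continuous_dist (f : R -> R) x : {for x, continuous f} ->
  forall e, 0 < e -> exists2 d, 0 < d &
    forall y, `|y - x| < d -> `|f y - f x| < e.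
Proof.
move=> /cvgrPdist_lt cf e e0; have /nbhs_ballP[d d0 H] := cf e e0.
exists d => // y yx; rewrite distrC; apply: H.
by rewrite /ball /= distrC.
Qed.

Lemma within_continuous_shift (f : R -> R) (A B : set R) t :
  {within A, continuous f} -> (forall s, B s -> A (t + s)) ->
  {within B, continuous (fun s => f (t + s))}.
Proof.
move=> cf AB; apply/subspace_continuousP => x Bx; apply/cvgrPdist_lt => e e0.
have [d d0 Hd] := within_continuous_dist cf (AB x Bx) e0.
rewrite near_withinE; apply/nbhs_ballP; exists d => // y /= yx By.
rewrite distrC; apply: Hd; first exact: AB.
by rewrite opprD addrACA subrr add0r distrC.
Qed.

Lemma le_left_limit (f : R -> R) (a s T m : R) : a < s < T ->
  {within `[a, T[, continuous f} -> (forall u, a <= u < s -> m <= f u) -> m <= f s.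
Proof.
move=> /andP[a_s sT] cf m_le; rewrite leNgt; apply/negP => fs_m.
have s_in : `[a, T[%classic s by rewrite /= in_itv /=; apply/andP; split; lra.
have [d d0 Hd] : exists2 d, 0 < d &
    forall u, `[a, T[%classic u -> `|u - s| < d -> `|f u - f s| < m - f s.
  by apply: within_continuous_dist; rewrite ?subr_gt0.
pose u := s - Num.min (s - a) d / 2.
have min_pos : 0 < Num.min (s - a) d by rewrite lt_min subr_gt0 a_s.
have min_le : Num.min (s - a) d <= s - a /\ Num.min (s - a) d <= d.
  by split; rewrite ge_min lexx ?orbT.
have u_in : a <= u < s by rewrite /u; apply/andP; split; lra.
have uT : `[a, T[%classic u by rewrite /= in_itv /=; apply/andP; split; lra.
have us : `|u - s| < d by rewrite /u addrAC subrr add0r normrN ger0_norm; lra.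
by have := Hd u uT us; have := m_le u u_in; rewrite ltr_norml; lra.
Qed.

Lemma exists_pos_uniform (m : nat) (P : 'I_m -> R -> Prop) :
  (forall k d d', 0 < d' <= d -> P k d -> P k d') ->
  (forall k, exists2 d, 0 < d & P k d) -> exists2 d, 0 < d & forall k, P k d.
Proof.
move=> Pdown Pex.
have [d Hd] := boolp.choice (fun k => let: ex_intro2 d d0 Pd := Pex k in
  ex_intro (fun d => 0 < d /\ P k d) d (conj d0 Pd)).
have dinv_ge0 : 0 <= \sum_k (d k)^-1.
  by rewrite sumr_ge0 // => k _; rewrite invr_ge0 ltW // (Hd k).1.
have e0 : 0 < (1 + \sum_k (d k)^-1)^-1 by rewrite invr_gt0 ltr_pwDl.
exists (1 + \sum_k (d k)^-1)^-1 => // k; apply: Pdown (Hd k).2.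
have dk0 := (Hd k).1.
rewrite e0 /= -[leRHS]invrK lef_pV2 ?posrE ?invr_gt0 ?ltr_pwDl //.
rewrite (bigD1 k) //= addrCA lerDl addr_ge0 // sumr_ge0 // => j _.
by rewrite invr_ge0 ltW // (Hd j).1.
Qed.

Lemma within_continuous_lt_near (m : nat) (f : 'I_m -> R -> R) (g : 'I_m -> R)
    (A : set R) s e :
  (forall k, {within A, continuous (f k)}) -> A s ->
  (forall k, `|f k s - g k| < e) ->
  exists2 r, 0 < r & forall u, A u -> `|u - s| < r -> forall k, `|f k u - g k| < e.
Proof.
move=> cf As fs.
suff [r r0 Hr] : exists2 r, 0 < r & forall k u, A u -> `|u - s| < r ->
    `|f k u - g k| < e by exists r => // u Au us k; exact: Hr.
apply: exists_pos_uniform => [k r r' /andP[_ r'r] Hr u Au us|k].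
  exact: Hr u Au (lt_le_trans us r'r).
have gap : 0 < e - `|f k s - g k| by rewrite subr_gt0.
have [r r0 Hr] := within_continuous_dist (cf k) As gap.
exists r => // u Au us; apply: le_lt_trans (ler_distD (f k s) _ _) _.
by rewrite -ltrBrDr; exact: Hr.
Qed.

Lemma within_continuous_sum (A : set R) (m : nat) (F : 'I_m -> R -> R) :
  (forall i, {within A, continuous (F i)}) ->
  {within A, continuous (fun t => \sum_i F i t)}.
Proof.
move=> cF; rewrite -fct_sumE.
apply: (big_ind (fun f : R -> R => {within A, continuous f})) => //.
- by apply: continuous_subspaceT => x; exact: cst_continuous.
- by move=> f g cf cg; exact: within_continuousD.
Qed.

Lemma continuation (T : R) (P : R -> Prop) :
  (forall s, 0 <= s < T -> (forall u, 0 <= u < s -> P u) -> P s) ->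
  (forall s, 0 <= s < T -> P s ->
     exists2 r, 0 < r & forall u, s <= u < T -> u < s + r -> P u) ->
  forall t, 0 <= t < T -> P t.
Proof.
move=> step open t /andP[t0 tT]; apply: contrapT => nPt.
pose A := [set u | 0 <= u <= t /\ ~ P u].
have At : A t by split; rewrite ?t0 ?lexx.
have A0 : A !=set0 by exists t.
have Alb : has_lbound A by exists 0 => u [/andP[]].
pose s := inf A.
have s0 : 0 <= s by apply: lb_le_inf => // u [/andP[]].
have st : s <= t by exact: (ge_inf Alb At).
have Ps : P s.
  apply: step => [|u /andP[u0 us]]; first by rewrite s0 (le_lt_trans st tT).
  apply: contrapT => nPu.
  have : s <= u by apply: (ge_inf Alb); split => //; rewrite u0 /=; lra.
  lra.
have [r r0 Hr] := open s (introT andP (conj s0 (le_lt_trans st tT))) Ps.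
have [a [/andP[a0 at_] nPa] asr] := inf_adherent r0 (conj A0 Alb).
have sa : s <= a by apply: (ge_inf Alb); split; rewrite ?a0.
by apply: nPa; apply: Hr; lra.
Qed.

Lemma is_derive_continuous (f : R -> R) (z df : R) :
  is_derive z 1 f df -> {for z, continuous f}.
Proof.
move=> fz; have : derivable f z 1 by exact: ex_derive.
by move=> /derivable1_diffP /differentiable_continuous.
Qed.

Lemma expR_tangent_le (a b : R) : expR a * (b - a) <= expR b - expR a.
Proof.
have -> : expR b = expR a * expR (b - a) by rewrite -expRD addrC subrK.
rewrite lerBrDl -[X in X + _]mulr1 -mulrDr ler_pM2l ?expR_gt0 //.
exact: expR_ge1Dx.
Qed.

Lemma expR_tangent_lt (a b : R) : a != b -> expR a * (b - a) < expR b - expR a.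
Proof.
move=> ab; have -> : expR b = expR a * expR (b - a) by rewrite -expRD addrC subrK.
rewrite ltrBrDl -[X in X + _]mulr1 -mulrDr ltr_pM2l ?expR_gt0 //.
by rewrite expR_gt1Dx // subr_eq0 eq_sym.
Qed.

(* Integrate [g] extended by zero from [a - 1], so that the primitive is
   continuous on a neighbourhood of the closed interval. *)
Lemma within_continuous_antiderivative (g : R -> R) (a b : R) : a < b ->
  {within `[a, b], continuous g} ->
  exists G : R -> R, (forall t, a <= t <= b -> {for t, continuous G}) /\
     (forall t, a < t < b -> is_derive t 1 G (g t)).
Proof.
move=> ab cg; pose gab := g \_ `[a, b].
have a1a : a - 1 < a by rewrite ltrBlDr ltrDl.
have bb1 : b < b + 1 by rewrite ltrDl.
have a1b1 : a - 1 < b + 1 by lra.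
have int_gab : (@lebesgue_measure R).-integrable `[a - 1, b + 1] (EFin \o gab).
  rewrite -restrict_EFin; apply/integrable_restrict => //=.
  rewrite setIidr; last by apply: subset_itvScc; rewrite bnd_simp ltW.
  by apply: continuous_compact_integrable => //; exact: segment_compact.
exists (fun x => \int[@lebesgue_measure R]_(t in `[a - 1, x]) gab t)%R; split.
  move=> t /andP[ta tb].
  have cG := parameterized_integral_continuous (ltW a1b1) int_gab.
  apply: (within_continuous_continuous _ cG); first exact: a1b1.
  by rewrite in_itv /=; apply/andP; split; lra.
move=> t /andP[ta tb].
have cgab : {for t, continuous gab}.
  have tab : t \in `]a, b[ by rewrite in_itv /= ta tb.
  have := cg t; rewrite {1}/continuous_at => cgt.
  rewrite /gab /prop_for /continuous_at patchE mem_set ?mulr1 /=.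
    exact: cvg_patch.
  exact: subset_itv_oo_cc.
have -> : g t = gab t by rewrite /gab patchE mem_set //= in_itv /= !ltW.
have [dG <-] := continuous_FTC1_closed (lt_trans tb bb1) int_gab (lt_trans a1a ta) cgab.
by rewrite derive1E; exact: derivableP.
Qed.

Lemma is_derive_shiftB (G : R -> R) (d t g : R) :
  is_derive (t - d) 1 G g -> is_derive t 1 (fun u => G (u - d)) g.
Proof.
move=> Gd; have shift_d : is_derive t 1 (fun u : R => u - d) 1.
  by have := is_deriveB (is_derive_id t (1 : R)) (is_derive_cst d t 1); rewrite subr0.
by have := @is_derive1_comp R G (fun u : R => u - d) t g 1 Gd shift_d; rewrite mulr1.
Qed.

End RealAnalysis.

(** * Relative entropy *)

Section RelativeEntropy.
Variable R : realType.

Definition rel_entropy (c z : R) := z * (ln z - ln c) - z + c.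

Lemma rel_entropyii (c : R) : rel_entropy c c = 0.
Proof. by rewrite /rel_entropy subrr mulr0 sub0r addNr. Qed.

Lemma is_derive_rel_entropy (c z : R) :
  0 < z -> is_derive z 1 (rel_entropy c) (ln z - ln c).
Proof.
move=> z0; rewrite /rel_entropy.
have := is_deriveD (is_deriveB (is_deriveM (is_derive_id z 1)
  (is_deriveB (is_derive1_ln z0) (is_derive_cst (ln c) z 1))) (is_derive_id z 1))
  (is_derive_cst c z 1).
by rewrite /GRing.scale /= subr0 addr0 mulr1 mulfV ?gt_eqF // [1 + _]addrC addrK.
Qed.

Lemma continuous_rel_entropy (c z : R) : 0 < z -> {for z, continuous (rel_entropy c)}.
Proof. by move=> z0; apply: is_derive_continuous (is_derive_rel_entropy c z0). Qed.

Lemma rel_entropy_young (m w b : R) : 0 < m -> 0 < w ->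
  w * b <= rel_entropy m w + m * (expR b - 1).
Proof.
move=> m0 w0; have := expR_tangent_le (ln w - ln m) b.
rewrite expRB !lnK ?posrE // -(ler_pM2l m0) mulrA [m * (_ - _)]mulrBr.
by rewrite [m * (w / m)]mulrC divfK ?gt_eqF // /rel_entropy; lra.
Qed.

Lemma rel_entropy_ge0 (c z : R) : 0 < c -> 0 < z -> 0 <= rel_entropy c z.
Proof.
by move=> c0 z0; have := rel_entropy_young 0 c0 z0; rewrite mulr0 expR0 subrr mulr0 addr0.
Qed.

Lemma rel_entropy_gt0 (c z : R) : 0 < c -> 0 < z -> z != c -> 0 < rel_entropy c z.
Proof.
move=> c0 z0 zc; have /expR_tangent_lt : ln z != ln c.
  by apply: contra zc => /eqP/ln_inj-> //; rewrite posrE.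
by rewrite !lnK ?posrE // /rel_entropy; lra.
Qed.

Lemma rel_entropy_tangent (c z w : R) : 0 < c -> 0 < z -> 0 < w ->
  rel_entropy c w + (ln w - ln c) * (z - w) <= rel_entropy c z.
Proof.
move=> c0 z0 w0; have := expR_tangent_le (ln z) (ln w).
by rewrite !lnK ?posrE // /rel_entropy; nra.
Qed.

Lemma rel_entropy_far1 (c r z : R) : 0 < r < c -> 0 < z -> r <= `|z - c| ->
  Num.min (rel_entropy c (c - r)) (rel_entropy c (c + r)) <= rel_entropy c z.
Proof.
move=> /andP[r0 rc] z0; have c0 : 0 < c by lra.
have [cz|zc] := lerP c z.
- move=> rz; rewrite ge_min; apply/orP; right.
  have cr0 : 0 < c + r by lra.
  apply: le_trans (rel_entropy_tangent c0 z0 cr0); rewrite lerDl mulr_ge0 //.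
    by rewrite subr_ge0 ler_ln ?posrE // lerDl ltW.
  by rewrite subr_ge0; lra.
- move=> rz; rewrite ge_min; apply/orP; left.
  have cr0 : 0 < c - r by lra.
  apply: le_trans (rel_entropy_tangent c0 z0 cr0); rewrite lerDl mulr_le0 //.
    by rewrite subr_le0 ler_ln ?posrE // gerBl ltW.
  by rewrite subr_le0; lra.
Qed.

Lemma rel_entropy_far (m : nat) (c r : 'I_m -> R) : (forall k, 0 < r k < c k) ->
  exists2 a, 0 < a & forall k z, 0 < z -> r k <= `|z - c k| -> a <= rel_entropy (c k) z.
Proof.
move=> rc; apply: exists_pos_uniform => [k a a' /andP[_ a'a] H z z0 rz|k].
  exact: le_trans a'a (H z z0 rz).
have /andP[r0 rcl] := rc k; have c0 : 0 < c k by lra.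
exists (Num.min (rel_entropy (c k) (c k - r k)) (rel_entropy (c k) (c k + r k))).
  by rewrite lt_min !rel_entropy_gt0 //; lra.
by move=> z z0 rz; apply: rel_entropy_far1; rewrite ?rc.
Qed.
End RelativeEntropy.

(** * Complex balance *)

Section ComplexBalance.
Variables (R : realType) (n : nat).
Implicit Types (S : dmas R n) (c z : 'I_n -> R).

Definition dotv (y : 'cV[R]_n) (v : 'I_n -> R) := \sum_j y j ord0 * v j.

Lemma dotvB y (u v : 'I_n -> R) : dotv y u - dotv y v = dotv y (fun j => u j - v j).
Proof. by rewrite /dotv -sumrB; apply: eq_bigr => j _; rewrite mulrBr. Qed.

Lemma mono_expR z y : (forall j, 0 < z j) -> mono z y = expR (dotv y (fun j => ln (z j))).
Proof.
by move=> z0; rewrite /mono /dotv expR_sum; apply: eq_bigr => j _; rewrite /powR gt_eqF.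
Qed.

Lemma mono_gt0 z y : (forall j, 0 < z j) -> 0 < mono z y.
Proof. by move=> z0; rewrite mono_expR ?expR_gt0. Qed.

Lemma mono_rebase c z y : (forall j, 0 < c j) -> (forall j, 0 < z j) ->
  mono z y = mono c y * expR (dotv y (fun j => ln (z j) - ln (c j))).
Proof. by move=> c0 z0; rewrite !mono_expR // -expRD -dotvB addrC subrK. Qed.

(* [complex_balanced], with the balance equations summed against an arbitrary
   weight [phi] of the complexes. *)
Definition flux_balanced S c : Prop :=
  forall phi : 'cV[R]_n -> R,
    \sum_i kappa S i * mono c (col i (ycomp S)) * phi (col i (ycomp' S)) =
    \sum_i kappa S i * mono c (col i (ycomp S)) * phi (col i (ycomp S)).

Lemma sum_by_complexes (m : nat) (s : seq 'cV[R]_n) (Y : 'M[R]_(n, m))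
    (w : 'I_m -> R) (phi : 'cV[R]_n -> R) :
  uniq s -> (forall i, col i Y \in s) ->
  \sum_i w i * phi (col i Y) = \sum_(eta <- s) phi eta * \sum_(i | col i Y == eta) w i.
Proof.
move=> s_uniq Ys.
transitivity (\sum_i \sum_(eta <- s | eta == col i Y) w i * phi eta).
  apply: eq_bigr => i _; rewrite -big_filter.
  by rewrite (eq_filter (a2 := pred1 (col i Y))) // filter_pred1_uniq // big_seq1.
under eq_bigr do rewrite big_mkcond /=.
rewrite exchange_big /=; apply: eq_bigr => eta _.
rewrite mulr_sumr [RHS]big_mkcond /=; apply: eq_bigr => i _.
by rewrite eq_sym; case: eqP => [<-|]; rewrite ?mulr0 // mulrC.
Qed.

Lemma complex_balanced_flux S xb : complex_balanced S xb -> flux_balanced S xb.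
Proof.
move=> [_ cb] phi.
pose s := undup ([seq col i (ycomp S) | i <- enum 'I_(nr S)] ++
                 [seq col i (ycomp' S) | i <- enum 'I_(nr S)]).
have cplx_s (Y : 'M[R]_(n, nr S)) i : Y \in [:: ycomp S; ycomp' S] -> col i Y \in s.
  rewrite !inE mem_undup mem_cat => /orP[]/eqP->; apply/orP; [left|right].
    by apply: map_f; rewrite mem_enum.
  by apply: map_f; rewrite mem_enum.
pose w i := kappa S i * mono xb (col i (ycomp S)).
rewrite (sum_by_complexes w phi (undup_uniq _) (fun i => cplx_s _ i _)) ?inE ?eqxx ?orbT //.
rewrite (sum_by_complexes w phi (undup_uniq _) (fun i => cplx_s _ i _)) ?inE ?eqxx //.
by apply: eq_bigr => eta _; rewrite cb.
Qed.

Lemma exchange_dotv S (v : 'I_n -> R) (F G : 'I_(nr S) -> R) :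
  \sum_k v k * \sum_i (F i * ycomp' S k i - G i * ycomp S k i) =
  \sum_i (F i * dotv (col i (ycomp' S)) v - G i * dotv (col i (ycomp S)) v).
Proof.
under eq_bigr do rewrite mulr_sumr.
rewrite exchange_big /=; apply: eq_bigr => i _.
rewrite /dotv !mulr_sumr -sumrB; apply: eq_bigr => k _.
by rewrite !mxE; ring.
Qed.

Lemma expR_tangent_sum_eq (m : nat) (W a b : 'I_m -> R) : (forall i, 0 < W i) ->
  \sum_i W i * expR (a i) * (b i - a i) = 0 ->
  \sum_i W i * expR (b i) = \sum_i W i * expR (a i) -> forall i, a i = b i.
Proof.
move=> W0 tangent0 exp_eq i.
have gap_ge0 j : 0 <= W j * (expR (b j) - expR (a j) - expR (a j) * (b j - a j)).
  by apply: mulr_ge0; [exact: ltW | rewrite subr_ge0 expR_tangent_le].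
have gap_sum0 : \sum_j W j * (expR (b j) - expR (a j) - expR (a j) * (b j - a j)) = 0.
  under eq_bigr do rewrite [W _ * (_ - _ - _)]mulrBr [W _ * (_ - _)]mulrBr mulrA.
  by rewrite !sumrB exp_eq tangent0 subrr subr0.
have /eqP := psumr_eq0P (fun j _ => gap_ge0 j) gap_sum0 (i := i) isT.
rewrite mulf_eq0 gt_eqF //= subr_eq0 => /eqP gap_i.
apply/eqP; apply: contraT => /expR_tangent_lt.
by rewrite gap_i ltxx.
Qed.

(* Horn and Jackson: once one positive equilibrium is complex balanced, all are. *)
Lemma positive_equilibrium_flux_balanced S xb c : (forall i, 0 < kappa S i) ->
  complex_balanced S xb -> positive_equilibrium S c -> flux_balanced S c.
Proof.
move=> k0 cbx [c0 eqc]; have CBx := complex_balanced_flux cbx; have xb0 := cbx.1.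
pose v j := ln (c j) - ln (xb j).
pose W i := kappa S i * mono xb (col i (ycomp S)).
pose a i := dotv (col i (ycomp S)) v.
pose b i := dotv (col i (ycomp' S)) v.
have W0 i : 0 < W i by rewrite mulr_gt0 ?mono_gt0.
have Wc i : kappa S i * mono c (col i (ycomp S)) = W i * expR (a i).
  by rewrite (mono_rebase _ xb0 c0) mulrA.
have ab : forall i, a i = b i.
  apply: expR_tangent_sum_eq W0 _ (CBx (fun eta => expR (dotv eta v))).
  transitivity (\sum_k v k * \sum_i (kappa S i * mono c (col i (ycomp S)) * ycomp' S k i
                   - kappa S i * mono c (col i (ycomp S)) * ycomp S k i)).
    rewrite exchange_dotv; apply: eq_bigr => i _.
    by rewrite Wc -mulrBr.
  rewrite big1 // => k _.
  by under eq_bigr do rewrite -mulrBr; rewrite eqc mulr0.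
move=> phi; have := CBx (fun eta => expR (dotv eta v) * phi eta).
under eq_bigr do rewrite mulrA -/W -/(b _) -ab -Wc.
by under [in RHS]eq_bigr do rewrite mulrA -/W -/(a _) -Wc.
Qed.

(* With [z = x(t)] and [w i = x(t - tau_i)^{y_i}], the left-hand side is the
   derivative of the Lyapunov functional. *)
Lemma lyapunov_derivative_le0 S c z (w : 'I_(nr S) -> R) :
  (forall i, 0 < kappa S i) -> (forall j, 0 < c j) -> (forall j, 0 < z j) ->
  (forall i, 0 < w i) -> flux_balanced S c ->
  \sum_k (ln (z k) - ln (c k)) *
      \sum_i kappa S i * (w i * ycomp' S k i - mono z (col i (ycomp S)) * ycomp S k i)
  + \sum_i kappa S i * (rel_entropy (mono c (col i (ycomp S))) (mono z (col i (ycomp S)))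
                       - rel_entropy (mono c (col i (ycomp S))) (w i)) <= 0.
Proof.
move=> k0 c0 z0 w0 CB; pose v j := ln (z j) - ln (c j).
have zE i : mono z (col i (ycomp S)) =
    mono c (col i (ycomp S)) * expR (dotv (col i (ycomp S)) v) by exact: mono_rebase.
have ln_zc i : ln (mono z (col i (ycomp S))) - ln (mono c (col i (ycomp S))) =
    dotv (col i (ycomp S)) v by rewrite !mono_expR // !expRK dotvB.
under eq_bigr do under eq_bigr do rewrite mulrBr !mulrA.
rewrite (exchange_dotv v) -big_split /=.
apply: le_trans (_ : _ <= \sum_i kappa S i * mono c (col i (ycomp S)) *
     (expR (dotv (col i (ycomp' S)) v) - expR (dotv (col i (ycomp S)) v))) _.
  apply: ler_sum => i _; set y := col i (ycomp S); set y' := col i (ycomp' S).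
  have young := rel_entropy_young (dotv y' v) (mono_gt0 y c0) (w0 i).
  have rel_z : rel_entropy (mono c y) (mono z y) =
      mono z y * dotv y v - mono z y + mono c y by rewrite /rel_entropy ln_zc.
  rewrite rel_z [X in _ <= X]mulrBr -[X in _ <= _ - X]mulrA -zE.
  by have := k0 i; nra.
under eq_bigr do rewrite mulrBr.
by rewrite sumrB (CB (fun eta => expR (dotv eta v))) subrr.
Qed.

Lemma rel_entropy_near S c (be : R) :
  (forall j, 0 < c j) -> 0 < be ->
  exists2 de, 0 < de & forall z, (forall k, 0 < z k) -> (forall k, `|z k - c k| < de) ->
    (forall k, rel_entropy (c k) (z k) <= be) /\
    (forall i, rel_entropy (mono c (col i (ycomp S))) (mono z (col i (ycomp S))) <= be).
Proof.
move=> c0 be0.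
pose ell i := dotv (col i (ycomp S)) (fun j => ln (c j)).
pose Y i := 1 + \sum_j `|ycomp S j i|.
have Y0 i : 0 < Y i by rewrite ltr_pwDl // sumr_ge0.
have [ze ze0 ze_le] : exists2 ze, 0 < ze & forall i (L : R),
    `|L - ell i| < ze * Y i -> rel_entropy (expR (ell i)) (expR L) <= be.
  apply: exists_pos_uniform => [i ze ze' /andP[ze'0 ze'ze] H L L_near|i].
    by apply: H; apply: lt_le_trans L_near _; rewrite ler_pM2r.
  have cont : {for ell i, continuous (fun L => rel_entropy (expR (ell i)) (expR L))}.
    apply: continuous_comp; first exact: continuous_expR.
    exact: continuous_rel_entropy (expR_gt0 _).
  have [d d0 Hd] := continuous_dist cont be0.
  exists (d / Y i); first by rewrite divr_gt0.
  move=> L; rewrite divfK ?gt_eqF // => /Hd; rewrite rel_entropyii subr0.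
  by move/ltW; apply: le_trans (ler_norm _).
have [de de0 de_le] : exists2 de, 0 < de & forall k (z : R), 0 < z -> `|z - c k| < de ->
    rel_entropy (c k) z <= be /\ `|ln z - ln (c k)| < ze.
  apply: exists_pos_uniform => [k d d' /andP[_ d'd] H z z0 zc|k].
    exact: H z z0 (lt_le_trans zc d'd).
  have [d1 d10 H1] := continuous_dist (continuous_rel_entropy (c := c k) (c0 k)) be0.
  have [d2 d20 H2] := continuous_dist (continuous_ln (c0 k)) ze0.
  exists (Num.min d1 d2); first by rewrite lt_min d10 d20.
  move=> z z0; rewrite lt_min => /andP[zd1 zd2]; split; last exact: H2.
  by have := H1 z zd1; rewrite rel_entropyii subr0 => /ltW; apply: le_trans (ler_norm _).
exists de => // z z0 zc; split => [k|i]; first exact: (de_le k (z k) (z0 k) (zc k)).1.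
rewrite !mono_expR //; apply: ze_le.
rewrite /ell dotvB /dotv (le_lt_trans (ler_norm_sum _ _ _)) // mulrDr mulr1 ltr_pwDl //.
rewrite mulr_sumr; apply: ler_sum => j _; rewrite mxE normrM mulrC ler_wpM2r //.
exact: ltW (de_le j (z j) (z0 j) (zc j)).2.
Qed.

End ComplexBalance.

(** * The Lyapunov functional *)

Definition pos_solution_on (R : realType) (n : nat) (S : dmas R n) (tau b : R)
    (x : R -> 'I_n -> R) : Prop :=
  [/\ forall u, -tau <= u <= b -> forall k, 0 < x u k,
      forall k, {within `[-tau, b], continuous (fun u => x u k)} &
      forall t, 0 < t < b -> forall k,
        is_derive t 1 (fun u => x u k) (Fdelay S (fun s => x (t + s)) k)].

Section Lyapunov.
Variables (R : realType) (n : nat) (P : dmas R n) (tau b : R) (c : 'I_n -> R).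
Variable x : R -> 'I_n -> R.
Hypotheses (tau_ge0 : 0 <= tau) (kappa_gt0 : forall i, 0 < kappa P i)
  (delay_ge0 : forall i, 0 <= delay P i) (delay_le : forall i, delay P i <= tau)
  (c_gt0 : forall j, 0 < c j) (balanced : flux_balanced P c) (b_gt0 : 0 < b)
  (solution : pos_solution_on P tau b x).

Definition delay_integrand i u :=
  kappa P i * rel_entropy (mono c (col i (ycomp P))) (mono (x u) (col i (ycomp P))).

Lemma solution_gt0 (u : R) : -tau <= u <= b -> forall k, 0 < x u k.
Proof. by case: solution => + _ _; apply. Qed.

Lemma delay_integrand_ge0 i (u : R) : -tau <= u <= b -> 0 <= delay_integrand i u.
Proof.
move=> u_in; apply: mulr_ge0; first exact: ltW.
by apply: rel_entropy_ge0; apply: mono_gt0 => //; exact: solution_gt0.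
Qed.

Lemma continuous_delay_integrand i : {within `[-tau, b], continuous (delay_integrand i)}.
Proof.
pose y := col i (ycomp P); pose L u := dotv y (fun j => ln (x u j)).
apply: (@subspace_eq_continuous _ _ _
  (fun u => kappa P i * rel_entropy (mono c y) (expR (L u)))).
  move=> u; rewrite inE /= in_itv /= => /andP[u1 u2].
  rewrite /= /from_subspace /delay_integrand -/y [mono (x u) y]mono_expR // => j.
  by apply: solution_gt0; rewrite u1.
have contL : {within `[-tau, b], continuous L}.
  apply: within_continuous_sum => j.
  apply: (@within_continuous_comp _ _ _ _ (fun u => x u j) (fun z => y j ord0 * ln z)).
    move=> z /set_mem [u]; rewrite /= in_itv /= => /andP[u1 u2] <-.
    apply: continuousM; first exact: cst_continuous.
    by apply: continuous_ln; apply: solution_gt0; rewrite u1.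
  by case: solution.
have cont_rel (z : R) :
    {for z, continuous (fun z : R => kappa P i * rel_entropy (mono c y) (expR z))}.
  apply: continuousM; first exact: cst_continuous.
  apply: continuous_comp; first exact: continuous_expR.
  exact: continuous_rel_entropy (expR_gt0 _).
exact: (@within_continuous_comp _ _ _ _ L _ (fun z _ => cont_rel z) contL).
Qed.

Variable G : 'I_(nr P) -> R -> R.
Hypotheses (G_cont : forall i (t : R), -tau <= t <= b -> {for t, continuous (G i)})
  (G_deriv : forall i (t : R), -tau < t < b -> is_derive t 1 (G i) (delay_integrand i t)).

(* [G i t - G i (t - delay P i)] is the integral of [delay_integrand i] over the
   delay window [t - tau_i, t]. *)
Definition lyapunov t :=
  \sum_k rel_entropy (c k) (x t k) + \sum_i (G i t - G i (t - delay P i)).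

Definition lyapunov_rate t :=
  \sum_k (ln (x t k) - ln (c k)) * Fdelay P (fun s => x (t + s)) k +
  \sum_i (delay_integrand i t - delay_integrand i (t - delay P i)).

Lemma is_derive_lyapunov (t : R) : 0 < t < b -> is_derive t 1 lyapunov (lyapunov_rate t).
Proof.
move=> t_in; have /andP[t0 tb] := t_in; case: solution => _ _ x_deriv.
have entropy_deriv : is_derive t 1 (\sum_k (fun u => rel_entropy (c k) (x u k)))
    (\sum_k (ln (x t k) - ln (c k)) * Fdelay P (fun s => x (t + s)) k).
  apply: (@is_derive_sum _ _ _ n (fun k u => rel_entropy (c k) (x u k))) => k.
  have xt0 : 0 < x t k by apply: solution_gt0; apply/andP; split; have := tau_ge0; lra.
  exact: is_derive1_comp (is_derive_rel_entropy (c k) xt0) (x_deriv t t_in k).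
have window_deriv : is_derive t 1 (\sum_i (fun u => G i u - G i (u - delay P i)))
    (\sum_i (delay_integrand i t - delay_integrand i (t - delay P i))).
  apply: (@is_derive_sum _ _ _ _ (fun i u => G i u - G i (u - delay P i))) => i.
  apply: is_deriveB; first by apply: G_deriv; apply/andP; split; have := tau_ge0; lra.
  apply: is_derive_shiftB; apply: G_deriv.
  by apply/andP; split; have := delay_ge0 i; have := delay_le i; lra.
by have := is_deriveD entropy_deriv window_deriv; rewrite !fct_sumE.
Qed.

Lemma lyapunov_rate_le0 (t : R) : 0 < t < b -> lyapunov_rate t <= 0.
Proof.
move=> /andP[t0 tb].
have xt0 : forall j, 0 < x t j.
  by apply: solution_gt0; apply/andP; split; have := tau_ge0; lra.
have xd0 i : forall j, 0 < x (t - delay P i) j.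
  by apply: solution_gt0; apply/andP; split; have := delay_ge0 i; have := delay_le i; lra.
have := lyapunov_derivative_le0 (w := fun i => mono (x (t - delay P i)) (col i (ycomp P)))
  kappa_gt0 c_gt0 xt0 (fun i => mono_gt0 _ (xd0 i)) balanced.
congr (_ + _ <= _).
  by apply: eq_bigr => k _; rewrite /Fdelay addr0.
by apply: eq_bigr => i _; rewrite -mulrBr.
Qed.

Lemma continuous_lyapunov : {within `[0, b], continuous lyapunov}.
Proof.
case: solution => _ x_cont _.
apply: within_continuousD.
  apply: within_continuous_sum => k.
  apply: (@within_continuous_comp _ _ _ _ (fun u => x u k) (rel_entropy (c k))).
    move=> z /set_mem [u]; rewrite /= in_itv /= => /andP[u0 ub] <-.
    by apply: continuous_rel_entropy; apply: solution_gt0; apply/andP; split;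
      have := tau_ge0; lra.
  apply: continuous_subspaceW (x_cont k).
  by apply: subset_itvScc; rewrite bnd_simp // oppr_le0.
apply: within_continuous_sum => i.
apply: continuous_in_subspaceT => u; rewrite inE /= in_itv /= => /andP[u0 ub].
apply: continuousB; first by apply: G_cont; apply/andP; split; have := tau_ge0; lra.
apply: continuous_comp.
  exact: is_derive_continuous (is_deriveB (is_derive_id u 1) (is_derive_cst _ u 1)).
by apply: G_cont; apply/andP; split; have := delay_ge0 i; have := delay_le i; lra.
Qed.

Lemma lyapunov_nonincreasing : lyapunov b <= lyapunov 0.
Proof.
have deriv t : t \in `]0, b[ -> is_derive t 1 lyapunov (lyapunov_rate t).
  by rewrite in_itv; exact: is_derive_lyapunov.
have [t t_in] := MVT b_gt0 deriv continuous_lyapunov.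
rewrite -subr_le0 => ->; apply: mulr_le0_ge0; last by rewrite subr0 ltW.
by apply: lyapunov_rate_le0; move: t_in; rewrite in_itv.
Qed.

Lemma delay_window_increment i (a : R) : 0 <= a <= b ->
  exists2 u : R, a - delay P i <= u <= a &
    G i a - G i (a - delay P i) = delay_integrand i u * delay P i.
Proof.
move=> /andP[a0 ab]; have := delay_ge0 i; have := delay_le i => dtau d0.
have [u u_in ->] : exists2 u, u \in `[a - delay P i, a] &
    G i a - G i (a - delay P i) = delay_integrand i u * (a - (a - delay P i)).
  apply: MVT_segment; first by lra.
    by move=> u; rewrite in_itv /= => /andP[u1 u2]; apply: G_deriv; apply/andP; split; lra.
  apply: continuous_in_subspaceT => u; rewrite inE /= in_itv /= => /andP[u1 u2].
  by apply: G_cont; apply/andP; split; lra.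
by exists u; [move: u_in; rewrite in_itv | rewrite opprB addrC subrK].
Qed.

Lemma lyapunov_bound_window (M : R) :
  (forall i (u : R), -tau <= u <= 0 ->
     rel_entropy (mono c (col i (ycomp P))) (mono (x u) (col i (ycomp P))) <= M) ->
  \sum_k rel_entropy (c k) (x b k) <=
    \sum_k rel_entropy (c k) (x 0 k) + \sum_i kappa P i * delay P i * M.
Proof.
move=> M_bound.
apply: le_trans (_ : _ <= lyapunov b) _.
  rewrite lerDl sumr_ge0 // => i _.
  have b_in : 0 <= b <= b by rewrite lexx andbT ltW.
  have [u /andP[u1 u2] ->] := delay_window_increment i b_in.
  apply: mulr_ge0 (delay_ge0 i); apply: delay_integrand_ge0; apply/andP; split => //.
  by have := delay_le i; have := b_gt0; lra.
apply: le_trans lyapunov_nonincreasing _; rewrite lerD2l; apply: ler_sum => i _.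
have zero_in : 0 <= (0 : R) <= b by rewrite lexx ltW.
have [u /andP[u1 u2] ->] := delay_window_increment i zero_in.
have u_in : -tau <= u <= 0 by apply/andP; split => //; have := delay_le i; lra.
have bound_u : delay_integrand i u <= kappa P i * M.
  by rewrite /delay_integrand ler_pM2l //; exact: M_bound.
by rewrite [leRHS]mulrAC; apply: ler_wpM2r; [exact: delay_ge0 | exact: bound_u].
Qed.
End Lyapunov.

Lemma lyapunov_decrease (R : realType) (n : nat) (P : dmas R n) (tau b : R)
    (c : 'I_n -> R) (x : R -> 'I_n -> R) (M : R) :
  0 <= tau -> (forall i, 0 < kappa P i) -> (forall i, 0 <= delay P i) ->
  (forall i, delay P i <= tau) -> (forall j, 0 < c j) -> flux_balanced P c ->
  0 < b -> pos_solution_on P tau b x ->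
  (forall i (u : R), -tau <= u <= 0 ->
     rel_entropy (mono c (col i (ycomp P))) (mono (x u) (col i (ycomp P))) <= M) ->
  \sum_k rel_entropy (c k) (x b k) <=
    \sum_k rel_entropy (c k) (x 0 k) + \sum_i kappa P i * delay P i * M.
Proof.
move=> tau0 k0 d0 dtau c0 cb b0 sol M_bound.
have tau_b : -tau < b by have := tau0; lra.
have [G /all_and2[G_cont G_deriv]] := boolp.choice (fun i =>
  within_continuous_antiderivative tau_b (continuous_delay_integrand (c := c) (i := i) sol)).
exact: (lyapunov_bound_window tau0 k0 d0 dtau c0 cb b0 sol G_cont G_deriv M_bound).
Qed.

(** * Linear conjugacy *)

Section Conjugacy.
Variables (R : realType) (n : nat) (S P : dmas R n) (tau : R) (q : 'I_n -> R).
Hypothesis conjugacy : lin_conj tau S P q.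

Lemma pos_cont_init_cst (c : 'I_n -> R) :
  (forall j, 0 < c j) -> pos_cont_init tau (fun _ => c).
Proof.
by move=> c0; split => // k; apply: continuous_subspaceT => x; exact: cst_continuous.
Qed.

Lemma lin_conj_equilibrium xs : positive_equilibrium S xs ->
  positive_equilibrium P (fun j => xs j / q j).
Proof.
case: conjugacy => q0 F_conj [xs0 eq_xs]; have c0 j : 0 < xs j / q j by rewrite divr_gt0.
split => // k; have := F_conj _ (pos_cont_init_cst c0) k.
have -> : (fun (_ : R) j => q j * (xs j / q j)) = (fun _ => xs).
  by apply/funext => s; apply/funext => j; rewrite mulrC divfK ?gt_eqF.
rewrite /Fdelay; under eq_bigr do rewrite -mulrBr mulrA.
rewrite eq_xs => /esym/eqP; rewrite mulf_eq0 gt_eqF //= => /eqP FP0.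
by rewrite -[RHS]FP0; apply: eq_bigr => i _; rewrite -mulrA mulrBr.
Qed.

Lemma lin_conj_pos_solution (b : R) (x : R -> 'I_n -> R) :
  pos_solution_on S tau b x -> pos_solution_on P tau b (fun u k => x u k / q k).
Proof.
case: conjugacy => q0 F_conj [x0 x_cont x_deriv].
have xq_cont k : {within `[-tau, b], continuous (fun u => x u k / q k)}.
  apply: (@within_continuous_comp _ _ _ _ (fun u => x u k) (fun z => z / q k)) (x_cont k).
  move=> z _.
  exact: is_derive_continuous (is_deriveM (is_derive_id z 1) (is_derive_cst (q k)^-1 z 1)).
split => [u u_in k|//|t t_in k]; first by rewrite divr_gt0 ?x0.
have /andP[t0 tb] := t_in; pose psi s j := x (t + s) j / q j.
have psi_init : pos_cont_init tau psi.
  split => [s /andP[s1 s2] j|j]; first by rewrite divr_gt0 ?x0 //; apply/andP; split; lra.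
  apply: within_continuous_shift (xq_cont j) _ => s.
  by rewrite /= !in_itv /= => /andP[s1 s2]; apply/andP; split; lra.
have := F_conj psi psi_init k.
have -> : (fun s j => q j * psi s j) = (fun s => x (t + s)).
  by apply/funext => s; apply/funext => j; rewrite /psi mulrC divfK ?gt_eqF.
move=> FS; have -> : Fdelay P psi k = (q k)^-1 *: Fdelay S (fun s => x (t + s)) k.
  by rewrite FS /GRing.scale /= mulKf ?gt_eqF.
have -> : (fun u => x u k / q k) = (q k)^-1 \*: (fun u => x u k).
  by apply/funext => u; rewrite /= mulrC.
exact: is_deriveZ (x_deriv t t_in k).
Qed.
End Conjugacy.

(** * Stability *)

Section Stability.
Variables (R : realType) (n : nat) (S P : dmas R n) (tau : R) (q xs xb : 'I_n -> R).
Hypotheses (tau_ge0 : 0 <= tau) (kappaP_gt0 : forall i, 0 < kappa P i)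
  (delayP_ge0 : forall i, 0 <= delay P i) (delayP_le : forall i, delay P i <= tau)
  (balancedP : complex_balanced P xb) (conjugacy : lin_conj tau S P q)
  (equilibrium : positive_equilibrium S xs).

Let c j := xs j / q j.

Lemma c_gt0 j : 0 < c j.
Proof. by rewrite divr_gt0 ?(equilibrium.1 j) ?(conjugacy.1 j). Qed.

Lemma dist_conj k (z : R) : `|z / q k - c k| = `|z - xs k| / q k.
Proof.
by rewrite -mulrBl normrM [`|(q k)^-1|]ger0_norm // invr_ge0 ltW ?(conjugacy.1 k).
Qed.

Lemma flux_balanced_c : flux_balanced P c.
Proof.
exact: positive_equilibrium_flux_balanced kappaP_gt0 balancedP
  (lin_conj_equilibrium conjugacy equilibrium).
Qed.

Lemma close_solution_pos (e s T : R) theta x : (forall k, e <= xs k / 2) ->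
  is_solution S tau theta T x -> 0 < s < T ->
  (forall u, -tau <= u < s -> forall k, `|x u k - xs k| < e) ->
  pos_solution_on S tau s x.
Proof.
move=> e_le [_ [x_cont x_deriv]] /andP[s0 sT] close.
have half_le u : -tau <= u < s -> forall k, xs k / 2 <= x u k.
  move=> u_in k; have := close u u_in k; have := e_le k.
  by rewrite ltr_norml; lra.
split => [u /andP[u1 u2] k|k|t /andP[t0 ts] k].
- apply: lt_le_trans (_ : xs k / 2 <= _); first by rewrite divr_gt0 ?(equilibrium.1 k).
  have [us|] := ltP u s; first by apply: half_le; rewrite u1.
  move=> su; have -> : u = s by apply/eqP; rewrite eq_le u2.
  apply: (le_left_limit (a := -tau) (T := T)) (x_cont k) _.
    by apply/andP; split; have := tau_ge0; lra.
  by move=> v v_in; exact: half_le.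
- by apply: continuous_subspaceW (x_cont k); apply: subset_itvl; rewrite bnd_simp.
- by apply: x_deriv; apply/andP; split; lra.
Qed.

Lemma conj_lyapunov_bound (s B : R) x : 0 < s -> pos_solution_on S tau s x ->
  (forall u : R, -tau <= u <= 0 ->
     (forall k, rel_entropy (c k) (x u k / q k) <= B) /\
     (forall i, rel_entropy (mono c (col i (ycomp P)))
                            (mono (fun j => x u j / q j) (col i (ycomp P))) <= B)) ->
  \sum_k rel_entropy (c k) (x s k / q k) <= (n%:R + \sum_i kappa P i * delay P i) * B.
Proof.
move=> s0 sol bounds.
apply: le_trans (lyapunov_decrease (M := B) tau_ge0 kappaP_gt0 delayP_ge0 delayP_le
  c_gt0 flux_balanced_c s0 (lin_conj_pos_solution conjugacy sol)
  (fun i u u_in => (bounds u u_in).2 i)) _.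
rewrite mulrDl mulr_suml lerD2r.
have zero_in : -tau <= (0 : R) <= 0 by rewrite oppr_le0 tau_ge0 lexx.
apply: le_trans (ler_sum _ (fun k _ => (bounds 0 zero_in).1 k)) _.
by rewrite sumr_const card_ord mulr_natl.
Qed.

Lemma closeness_propagates (e : R) : 0 < e -> (forall k, e <= xs k / 2) ->
  exists2 delta : R, 0 < delta <= e & forall (theta x : R -> 'I_n -> R) (T : R),
    (forall u : R, -tau <= u <= 0 -> forall k, `|theta u k - xs k| < delta) ->
    is_solution S tau theta T x -> forall s : R, 0 <= s < T ->
    (forall u : R, 0 <= u < s -> forall k, `|x u k - xs k| < e) ->
    forall k, `|x s k - xs k| < e.
Proof.
move=> e0 e_le; have q0 := conjugacy.1; have xs0 := equilibrium.1.
have r_in k : 0 < e / q k < c k.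
  by rewrite divr_gt0 // ltr_pM2r ?invr_gt0 //; have := e_le k; have := xs0 k; lra.
(* A coordinate [e]-far from [xs] pushes the entropy sum above [a]; initial data
   with both entropy terms below [a / (K + 1)] keep it below [K a / (K + 1)]. *)
have [a a0 far] := rel_entropy_far r_in.
pose K := n%:R + \sum_i kappa P i * delay P i.
have K0 : 0 <= K.
  rewrite addr_ge0 // sumr_ge0 // => i _.
  by apply: mulr_ge0; [exact: ltW | exact: delayP_ge0].
have B0 : 0 < a / (K + 1) by rewrite divr_gt0 // ltr_pwDr.
have KB : K * (a / (K + 1)) < a.
  by rewrite mulrA ltr_pdivrMr ?ltr_pwDr // mulrC ltr_pM2l //; lra.
have [de de0 near] := rel_entropy_near P c_gt0 B0.
have [d d0 d_le] : exists2 d, 0 < d & forall k, d <= q k * de.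
  apply: exists_pos_uniform => [k d d' /andP[_ d'd] H|k]; first exact: le_trans d'd H.
  by exists (q k * de); rewrite ?mulr_gt0.
exists (Num.min d e); first by rewrite lt_min d0 e0 ge_min lexx orbT.
move=> theta x T init sol s /andP[s0 sT] close k.
have [x_init _] := sol; have min_le_e : Num.min d e <= e by rewrite ge_min lexx orbT.
have close_init (u : R) : -tau <= u <= 0 -> forall k, `|x u k - xs k| < Num.min d e.
  by move=> u_in j; rewrite x_init //; exact: init.
have [->|s_ne0] := eqVneq s 0.
  by apply: lt_le_trans min_le_e; apply: close_init; rewrite lexx andbT oppr_le0.
have s_pos : 0 < s < T by rewrite sT andbT lt_neqAle eq_sym s_ne0.
have sol_s : pos_solution_on S tau s x.
  apply: (close_solution_pos e_le sol s_pos) => u /andP[u1 u2] j.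
  have [u0|u0] := ltP u 0; last by apply: close; rewrite u0.
  by apply: lt_le_trans min_le_e; apply: close_init; rewrite u1 ltW.
have [x_pos _ _] := sol_s.
have min_le_d : Num.min d e <= d by rewrite ge_min lexx.
have bounds (u : R) : -tau <= u <= 0 ->
    (forall k, rel_entropy (c k) (x u k / q k) <= a / (K + 1)) /\
    (forall i, rel_entropy (mono c (col i (ycomp P)))
                 (mono (fun j => x u j / q j) (col i (ycomp P))) <= a / (K + 1)).
  move=> u_in; apply: near => j.
    by rewrite divr_gt0 //; apply: x_pos; case/andP: u_in => -> u0; rewrite (le_trans u0 s0).
  rewrite dist_conj ltr_pdivrMr // mulrC; apply: lt_le_trans (d_le j).
  exact: lt_le_trans (close_init u u_in j) min_le_d.
have x_s_pos : 0 < x s k / q k.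
  by rewrite divr_gt0 // x_pos // lexx andbT; have := tau_ge0; lra.
have /andP[s_gt0 _] := s_pos.
have sum_lt := le_lt_trans (conj_lyapunov_bound s_gt0 sol_s bounds) KB.
rewrite ltNge; apply/negP => far_k.
have := far k _ x_s_pos; rewrite dist_conj ler_pM2r ?invr_gt0 // => /(_ far_k) a_le.
have : rel_entropy (c k) (x s k / q k) <= \sum_j rel_entropy (c j) (x s j / q j).
  rewrite (bigD1 k) //= lerDl sumr_ge0 // => j _; rewrite rel_entropy_ge0 ?c_gt0 //.
  by rewrite divr_gt0 // x_pos // lexx andbT; have := tau_ge0; lra.
lra.
Qed.

Lemma stays_close (e : R) : 0 < e -> (forall k, e <= xs k / 2) ->
  exists2 delta : R, 0 < delta <= e & forall (theta x : R -> 'I_n -> R) (T : R),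
    (forall u : R, -tau <= u <= 0 -> forall k, `|theta u k - xs k| < delta) ->
    is_solution S tau theta T x ->
    forall u : R, 0 <= u < T -> forall k, `|x u k - xs k| < e.
Proof.
move=> e0 e_le; have [delta delta_in propagate] := closeness_propagates e0 e_le.
exists delta => // theta x T init sol; have [_ [x_cont _]] := sol.
apply: continuation => [u u_in|u /andP[u0 uT] close_u]; first exact: propagate init sol u u_in.
have u_in : `[-tau, T[%classic u.
  by rewrite /= in_itv /= uT andbT (le_trans _ u0) // oppr_le0.
have [r r0 near] := within_continuous_lt_near x_cont u_in close_u.
exists r => // v /andP[uv vT] vr; apply: near.
  by rewrite /= in_itv /= vT andbT (le_trans _ (le_trans u0 uv)) // oppr_le0.
by rewrite ger0_norm ?subr_ge0 // ltrBlDl.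
Qed.

End Stability.

Unset Implicit Arguments.
Theorem mainTheorem2 (R : realType) (n : nat) (S : dmas R n) (tau : R) :
  0 <= tau -> (forall i, delay S i <= tau) ->
  lcDCB tau S ->
  forall xs : 'I_n -> R, positive_equilibrium S xs ->
  lyapunov_stable S tau xs.
Proof.
move=> tau0 _ [_ [P [q [delayP_le [[[_ [_ [kappaP delayP]]] [xb cbP]] conjugacy]]]]] xs eq_xs.
move=> eps eps0.
have [e0 e0_pos e0_le] : exists2 e, 0 < e & forall k, e <= xs k / 2.
  apply: exists_pos_uniform => [k e e' /andP[_ e'e] H|k]; first exact: le_trans e'e H.
  by exists (xs k / 2); rewrite ?divr_gt0 ?(eq_xs.1 k).
have e_pos : 0 < Num.min eps e0 by rewrite lt_min eps0 e0_pos.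
have e_le k : Num.min eps e0 <= xs k / 2 by rewrite ge_min e0_le orbT.
have [delta /andP[delta0 delta_e] close] :=
  stays_close tau0 kappaP delayP delayP_le cbP conjugacy eq_xs e_pos e_le.
exists delta => // theta _ init T x _ sol t /andP[t0 tT] s /andP[s1 s2] k.
apply: lt_le_trans (_ : Num.min eps e0 <= eps); last by rewrite ge_min lexx.
have [ts0|ts0] := ltP (t + s) 0; last by apply: (close _ _ _ init sol); rewrite ts0 /=; lra.
have [x_init _] := sol; rewrite x_init; last by apply/andP; split; lra.
by apply: lt_le_trans delta_e; apply: init; apply/andP; split; lra.
Qed.
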